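(* Fix an integer $C\ge 2$. There exists $\rho_0>0$ (depending only on $C$; e.g. $\rho_0=3$ suffices) such that for every $\rho\ge\rho_0$ and all $h_L\in[0,1]$, $h_S\in[0,1]$, $h_F\in(-1,1)$, $$\frac{\partial \mathcal{J}_h^{\mathcal{G}}}{\partial h_S}\ge 0 .$$
   Context: Setting: $C\ge 2$ is the number of classes, $h_L\in[0,1]$ (label homophily), $h_S\in[0,1]$ (structural homophily), $h_F\in(-1,1)$ (feature homophily), and $\rho>0$ a real parameter (the spectral radius of the adjacency matrix). Define $$p_0=\frac{h_LC-1}{C-1},\qquad p_1=\frac{1-h_L}{C-1},\qquad \omega=\frac{h_F}{\rho},\qquad Q=C\,p_1^2+\frac{C(1-h_S)^2}{C-1}+p_0^2\ (>0),$$ $$\mathcal{J}_h^{\neg\mathcal{G}}=\frac{1-\omega^2 Q}{(1-\omega p_0)^2},\qquad \mathcal{J}_h^{\mathcal{G}}=\frac{p_0^2}{Q}\,\mathcal{J}_h^{\neg\mathcal{G}}.$$ Partial derivatives are taken with $C$ and $\rho$ held fixed. *)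

From Stdlib Require Import Reals.
From Coquelicot Require Import Coquelicot.
Open Scope R_scope.

Definition p0 (C : nat) (hL : R) : R := (hL * INR C - 1) / (INR C - 1).
Definition p1 (C : nat) (hL : R) : R := (1 - hL) / (INR C - 1).
Definition omega (rho hF : R) : R := hF / rho.
Definition Qf (C : nat) (hL hS : R) : R :=
  INR C * (p1 C hL)^2 + INR C * (1 - hS)^2 / (INR C - 1) + (p0 C hL)^2.

Definition J_notG (C : nat) (rho hL hS hF : R) : R :=
  (1 - (omega rho hF)^2 * Qf C hL hS) / (1 - omega rho hF * p0 C hL)^2.

Definition J_G (C : nat) (rho hL hS hF : R) : R :=
  (p0 C hL)^2 / Qf C hL hS * J_notG C rho hL hS hF.

(* Writing D = (1 - omega p0)^2, the measure rewrites as
   J_h^G = p0^2 / D * (1 / Q - omega^2), and h_S enters only through Q, which is a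
   decreasing function of h_S on [0, 1].  Once rho >= 1 we have |omega| < 1 and
   |p0| <= 1, so D > 0 and dJ/dh_S = p0^2 / D * (- dQ/dh_S) / Q^2 >= 0. *)
From Stdlib Require Import Reals Lra Psatz.
From Coquelicot Require Import Coquelicot.
Open Scope R_scope.

Lemma INR_ge2 (C : nat) : (2 <= C)%nat -> 2 <= INR C.
Proof. intro HC; replace 2 with (INR 2) by (simpl; lra); exact (le_INR _ _ HC). Qed.

Lemma p0_p1 (C : nat) (hL : R) : INR C <> 1 -> p0 C hL = 1 - INR C * p1 C hL.
Proof. intro HC; unfold p0, p1; field; lra. Qed.

Lemma p0_bounds (C : nat) (hL : R) :
  2 <= INR C -> 0 <= hL <= 1 -> -1 <= p0 C hL <= 1.
Proof.
  intros HC HL; unfold p0.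
  split; [apply Rmult_le_reg_r with (INR C - 1) | apply Rmult_le_reg_r with (INR C - 1)];
    try lra; field_simplify; nra.
Qed.

Lemma omega_bounds (rho hF : R) : 1 <= rho -> -1 < hF < 1 -> -1 < omega rho hF < 1.
Proof.
  intros Hr HF; unfold omega.
  split; apply (Rmult_lt_reg_r rho); try lra; field_simplify; nra.
Qed.

Lemma one_sub_mul_pos (w a : R) : -1 < w < 1 -> -1 <= a <= 1 -> 0 < 1 - w * a.
Proof.
  intros Hw Ha; destruct (Rle_dec 0 a).
  - assert (0 <= (1 - w) * a) by (apply Rmult_le_pos; lra); nra.
  - assert (0 <= (1 + w) * - a) by (apply Rmult_le_pos; lra); nra.
Qed.

(* p0 and p1 cannot vanish together because p0 + C p1 = 1. *)
Lemma Qf_pos (C : nat) (hL hS : R) : 1 < INR C -> 0 < Qf C hL hS.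
Proof.
  intro HC; unfold Qf.
  assert (Hmid : 0 <= INR C * (1 - hS) ^ 2 / (INR C - 1)).
  { apply Rmult_le_pos; [apply Rmult_le_pos; [lra | apply pow2_ge_0] |].
    apply Rlt_le, Rinv_0_lt_compat; lra. }
  rewrite (p0_p1 C hL) by lra.
  assert (Hsq := pow2_ge_0 (1 - INR C * p1 C hL)).
  destruct (Req_dec (p1 C hL) 0) as [E | E]; [rewrite E; lra |].
  assert (0 < INR C * p1 C hL ^ 2).
  { apply Rmult_lt_0_compat; [lra |].
    rewrite <- Rsqr_pow2; apply Rsqr_pos_lt; exact E. }
  lra.
Qed.

Lemma J_G_decomp (C : nat) (rho hL hS hF : R) :
  Qf C hL hS <> 0 -> 1 - omega rho hF * p0 C hL <> 0 ->
  J_G C rho hL hS hF =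
    (p0 C hL) ^ 2 / (1 - omega rho hF * p0 C hL) ^ 2 * (/ Qf C hL hS - (omega rho hF) ^ 2).
Proof. intros HQ HD; unfold J_G, J_notG; field; auto. Qed.

Lemma is_derive_Qf_hS (C : nat) (hL hS : R) : INR C <> 1 ->
  is_derive (fun s => Qf C hL s) hS (- (2 * INR C * (1 - hS) / (INR C - 1))).
Proof. intro HC; unfold Qf; auto_derive; [lra | field; lra]. Qed.

Lemma is_derive_J_G_hS (C : nat) (rho hL hS hF : R) :
  1 < INR C -> 1 - omega rho hF * p0 C hL <> 0 ->
  is_derive (fun s => J_G C rho hL s hF) hS
    ((p0 C hL) ^ 2 / (1 - omega rho hF * p0 C hL) ^ 2
       * (2 * INR C * (1 - hS) / (INR C - 1) / Qf C hL hS ^ 2)).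
Proof.
  intros HC HD.
  set (k := (p0 C hL) ^ 2 / (1 - omega rho hF * p0 C hL) ^ 2).
  apply (is_derive_ext (fun s => k * (/ Qf C hL s - (omega rho hF) ^ 2))).
  { intro s; symmetry; apply J_G_decomp; [apply Rgt_not_eq, Qf_pos |]; assumption. }
  apply is_derive_scal.
  assert (HQ := Qf_pos C hL hS HC).
  replace (2 * INR C * (1 - hS) / (INR C - 1) / Qf C hL hS ^ 2)
    with (- - (2 * INR C * (1 - hS) / (INR C - 1)) / Qf C hL hS ^ 2 - 0) by (field; lra).
  apply (is_derive_minus _ (fun _ => (omega rho hF) ^ 2)).
  - apply is_derive_inv; [apply is_derive_Qf_hS |]; lra.
  - exact (is_derive_const _ _).
Qed.

Theorem theorem2p2 (C : nat) (HC : (2 <= C)%nat) :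
  exists rho0 : R, 0 < rho0 /\
    forall rho hL hS hF : R,
      rho0 <= rho ->
      0 <= hL <= 1 -> 0 <= hS <= 1 -> -1 < hF < 1 ->
      ex_derive (fun s => J_G C rho hL s hF) hS /\
      0 <= Derive (fun s => J_G C rho hL s hF) hS.
Proof.
  exists 1; split; [lra |].
  intros rho hL hS hF Hr HL HS HF.
  assert (HC2 := INR_ge2 C HC).
  assert (HD := one_sub_mul_pos _ _ (omega_bounds rho hF Hr HF) (p0_bounds C hL HC2 HL)).
  assert (HQ := Qf_pos C hL hS ltac:(lra)).
  assert (Hder := is_derive_J_G_hS C rho hL hS hF ltac:(lra) ltac:(lra)).
  split; [eexists; exact Hder |].
  erewrite is_derive_unique by exact Hder.
  apply Rmult_le_pos; [apply Rmult_le_pos | repeat apply Rmult_le_pos].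
  all: try apply pow2_ge_0; try lra.
  all: apply Rlt_le, Rinv_0_lt_compat; try lra; apply pow_lt; lra.
Qed.
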